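(* Let $\varphi\in\mathcal I^L$ and let $S=(S_{kl})$ be the symmetric integer matrix with $\varphi_*(b_l)=b_l+\sum_k S_{kl}a_k$. Then for every $x\in D_2(H)$, $$\mu(x,\varphi)=\Big(\tfrac12\omega_S+\omega_\delta\Big)\big(\operatorname{Tr}^{\omega_S}(x)\big).$$
   Context: Let $\Sigma_{g,1}$ be a compact connected oriented surface of genus $g$ with one boundary component, $\mathcal M$ its mapping class group (fixing the boundary pointwise), $H=H_1(\Sigma_{g,1};\mathbb Z)$ with intersection form $\omega$, $\mathcal L(H)$ the free Lie ring on $H$ embedded in $T(H)$ via $[x,y]=x\otimes y-y\otimes x$, and $D_2(H)=\ker(H\otimes\mathcal L_3(H)\to\mathcal L_4(H),\ h\otimes u\mapsto[h,u])$. Let $V_g$ be a handlebody with $\Sigma_{g,1}\subset\partial V_g$; $A=\ker(H\to H_1(V_g;\mathbb Z))$. The Lagrangian Torelli group is $\mathcal I^L:=\{\varphi\in\mathcal M:\varphi_*(A)\subset A,\ \varphi_*|_A=\mathrm{id}\}$. Let $j:\Sigma_{g,1}\to S^3$ be a Heegaard embedding (i.e. $j(\Sigma_{g,1})$ is a genus-$g$ Heegaard surface minus an open disk, splitting $S^3$ into inner handlebody $\overline V$ and outer $\overline W$, oriented from $\overline V$) which extends to $V_g$ with $j(V_g)=\overline V$; $j^+$ is $j$ pushed into $\overline W$. Fix a symplectic basis $(a_1,\dots,a_g,b_1,\dots,b_g)$ of $H$ (classes of meridians and parallels of $\overline V$, pulled back by $j$) with $a_i\in A$, such that $\operatorname{lk}(j_*(x),j^+_*(y))=\omega_\delta(x,y)$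 for all $x,y\in H$, where $\omega_\delta$ is the bilinear form on $H$ with $\omega_\delta(b_i,a_k)=\delta_{ik}$ and $\omega_\delta$ vanishing on all other pairs of basis vectors. For a symmetric matrix $S$, $\omega_S$ is the bilinear form on $H$ with $\omega_S(b_k,b_l)=S_{kl}$ and $\omega_S(a_k,\cdot)=\omega_S(\cdot,a_k)=0$; a bilinear form $\beta$ is applied to $H\otimes H$ by $x\otimes y\mapsto\beta(x,y)$. $\operatorname{Tr}^{\omega_S}:D_2(H)\to H^{\otimes2}$ is the composite $D_2(H)\subset H\otimes\mathcal L_3(H)\subset H^{\otimes4}\to H^{\otimes2}$, $x_1\otimes x_2\otimes x_3\otimes x_4\mapsto\omega_S(x_1,x_2)\,x_3\otimes x_4$. With $x\leftrightarrow y:=x\otimes y+y\otimes x$, $T(a,b;c,d):=a\otimes[b,[c,d]]+b\otimes[[c,d],a]+c\otimes[d,[a,b]]+d\otimes[[a,b],c]$, $a\odot b:=a\otimes[b,[a,b]]+b\otimes[[a,b],a]$, let $\Psi:(\Lambda^2H\otimes\Lambda^2H)^{\mathfrak S_2}\to D_2(H)$ be the surjection $(a\wedge b)\leftrightarrow(c\wedge d)\mapsto T(a,b;c,d)$, $(a\wedge b)\otimes(a\wedge b)\mapsto a\odot b$. Let $\mathcal C$ be the commutative unital ring generated by $l(u,v)$ ($u,v\in H$), linear in $u$, with $l(v,u)=l(u,v)+\omega(u,v)$; for a Heegaard embedding $k$, $\varepsilon_k:\mathcal C\to\mathbb Z$ is the ring map $l(u,v)\mapsto\operatorname{lk}(k_*(u),k^+_*(v))$;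 $\theta:(\Lambda^2H\otimes\Lambda^2H)^{\mathfrak S_2}\to\mathcal C$ is given by $(u\wedge v)\otimes(u\wedge v)\mapsto l(u,u)l(v,v)-l(u,v)l(v,u)$ and $(a\wedge b)\leftrightarrow(c\wedge d)\mapsto l(a,c)l(b,d)-l(a,d)l(b,c)-l(d,a)l(c,b)+l(c,a)l(d,b)$. Finally $\mu:D_2(H)\times\mathcal M\to\mathbb Z$ is the (well-defined) map $\mu(\Psi(x),\varphi)=(\varepsilon_j-\varepsilon_{j\circ\varphi})(\theta(x))$. *)

(* Algebraic model of H = H_1(Sigma_{g,1};Z) = Z^{2g}
   with symplectic basis (a_1..a_g, b_1..b_g), row-vector convention. *)
From mathcomp Require Import all_boot all_algebra.
Set Implicit Arguments. Unset Strict Implicit. Unset Printing Implicit Defensive.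
Import GRing.Theory.
Local Open Scope ring_scope.

Definition H (g : nat) := 'rV[int]_(g + g).
Definition avec {g : nat} (i : 'I_g) : H g := delta_mx 0 (lshift g i).
Definition bvec {g : nat} (i : 'I_g) : H g := delta_mx 0 (rshift g i).

Definition bil {g : nat} (M : 'M[int]_(g + g)) (x y : H g) : int :=
  (x *m M *m y^T) 0 0.

(* intersection form: omega(a_i,b_j) = delta_ij, omega(b_j,a_i) = -delta_ij *)
Definition omega_mx (g : nat) : 'M[int]_(g + g) := block_mx 0 1%:M (- 1%:M) 0.
Definition omega_delta_mx (g : nat) : 'M[int]_(g + g) := block_mx 0 0 1%:M 0.
Definition omega_S_mx {g : nat} (S : 'M[int]_g) : 'M[int]_(g + g) :=
  block_mx 0 0 0 S.

(* Formal elements of the tensor algebra T(H) (over Q): finite formal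
   linear combinations of words x_1 (x) ... (x) x_n. *)
Definition tensor (g : nat) := seq (rat * seq (H g)).
Definition tvec {g : nat} (x : H g) : tensor g := [:: (1, [:: x])].
Definition tadd {g : nat} (s t : tensor g) : tensor g := s ++ t.
Definition tscale {g : nat} (c : rat) (s : tensor g) : tensor g :=
  [seq (c * p.1, p.2) | p <- s].
Definition tmul {g : nat} (s t : tensor g) : tensor g :=
  [seq (p.1 * q.1, p.2 ++ q.2) | p <- s, q <- t].
Definition tsub {g : nat} (s t : tensor g) : tensor g := tadd s (tscale (-1) t).
Definition lie {g : nat} (s t : tensor g) : tensor g := tsub (tmul s t) (tmul t s).

Definition Tgen {g : nat} (a b c d : H g) : tensor g :=
  tadd (tadd (tmul (tvec a) (lie (tvec b) (lie (tvec c) (tvec d))))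
             (tmul (tvec b) (lie (lie (tvec c) (tvec d)) (tvec a))))
       (tadd (tmul (tvec c) (lie (tvec d) (lie (tvec a) (tvec b))))
             (tmul (tvec d) (lie (lie (tvec a) (tvec b)) (tvec c)))).
Definition odot {g : nat} (a b : H g) : tensor g :=
  tadd (tmul (tvec a) (lie (tvec b) (lie (tvec a) (tvec b))))
       (tmul (tvec b) (lie (lie (tvec a) (tvec b)) (tvec a))).

(* Generators of (Lambda^2 H (x) Lambda^2 H)^{S_2}:
   GPair a b c d = (a^b) <-> (c^d),  GSq a b = (a^b)(x)(a^b).
   A general element is a finite Z-linear combination of generators. *)
Inductive gen (g : nat) : Type :=
| GPair of H g & H g & H g & H g
| GSq of H g & H g.
Arguments GPair {g}. Arguments GSq {g}.

Definition Psi_gen {g : nat} (x : gen g) : tensor g :=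
  match x with
  | GPair a b c d => Tgen a b c d
  | GSq a b => odot a b
  end.
Definition Psi {g : nat} (x : seq (int * gen g)) : tensor g :=
  flatten [seq tscale (p.1)%:~R (Psi_gen p.2) | p <- x].

(* theta followed by a ring map epsilon : C -> Z, where epsilon is
   determined by its values L u v = epsilon(l(u,v)). *)
Definition theta_gen {g : nat} (L : H g -> H g -> int) (x : gen g) : int :=
  match x with
  | GPair a b c d => L a c * L b d - L a d * L b c - L d a * L c b + L c a * L d b
  | GSq u v => L u u * L v v - L u v * L v u
  end.
Definition eps_theta {g : nat} (L : H g -> H g -> int) (x : seq (int * gen g)) : int :=
  \sum_(p <- x) p.1 * theta_gen L p.2.

(* epsilon_j(l(u,v)) = lk(j_* u, j^+_* v) = omega_delta(u,v) *)
Definition lk_j {g : nat} : H g -> H g -> int := bil (omega_delta_mx g).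
(* epsilon_{j o phi}(l(u,v)) = lk(j_* phi_* u, j^+_* phi_* v)
   = omega_delta(phi_* u, phi_* v), where phi_* acts by x |-> x *m P *)
Definition lk_jphi {g : nat} (P : 'M[int]_(g + g)) : H g -> H g -> int :=
  fun u v => bil (omega_delta_mx g) (u *m P) (v *m P).

(* mu(Psi(x), phi) = (eps_j - eps_{j o phi})(theta(x)) *)
Definition mu {g : nat} (P : 'M[int]_(g + g)) (x : seq (int * gen g)) : int :=
  eps_theta lk_j x - eps_theta (lk_jphi P) x.

Definition tlin {g : nat} (f : seq (H g) -> rat) (t : tensor g) : rat :=
  \sum_(p <- t) p.1 * f p.2.

Definition half_S_plus_delta {g : nat} (S : 'M[int]_g) (x y : H g) : rat :=
  (bil (omega_S_mx S) x y)%:~R / 2%:R + (bil (omega_delta_mx g) x y)%:~R.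

(* word x1 x2 x3 x4 |-> omega_S(x1,x2) * beta(x3,x4): i.e. beta o Tr^{omega_S} *)
Definition trS_then {g : nat} (S : 'M[int]_g) (beta : H g -> H g -> rat)
  (w : seq (H g)) : rat :=
  match w with
  | [:: x1; x2; x3; x4] => (bil (omega_S_mx S) x1 x2)%:~R * beta x3 x4
  | _ => 0
  end.

(* Both sides are additive in x, so it suffices to treat a single
   generator (a^b)<->(c^d) or (a^b)(x)(a^b) of (Lambda^2 H (x) Lambda^2 H)^{S_2}.
   - The functional tlin is linear in its tensor argument, so tlin of Psi x is
     the weighted sum of tlin over the images of the generators; likewise mu is
     the weighted sum of the per-generator differences of theta.
   - The action of phi has block matrix [[1, 0], [S, 1]] (a_i fixed, b_l moved
     by the l-th column of S).  Hence the linking form after phi is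
     omega_delta + omega_S, i.e. eps_{j o phi}(l(u,v)) = eps_j(l(u,v)) + omega_S(u,v),
     and omega_S is symmetric because S is.
   - For one generator the identity is then a polynomial identity in the values
     of omega_delta and omega_S on the four vectors, closed by field. *)
From mathcomp Require Import all_boot all_algebra ring.
Import GRing.Theory.
Local Open Scope ring_scope.

Section TensorFunctionals.
Variable g : nat.
Implicit Types (f : seq (H g) -> rat) (s t : tensor g).

Lemma tlin_tadd f s t : tlin f (tadd s t) = tlin f s + tlin f t.
Proof. by rewrite /tlin /tadd big_cat. Qed.

Lemma tlin_tscale f c s : tlin f (tscale c s) = c * tlin f s.
Proof.
rewrite /tlin /tscale big_map big_distrr /=.
by apply: eq_bigr => p _; rewrite mulrA.
Qed.

Lemma tlin_Psi f (x : seq (int * gen g)) :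
  tlin f (Psi x) = \sum_(p <- x) p.1%:~R * tlin f (Psi_gen p.2).
Proof.
elim: x => [|[c y] x IH]; first by rewrite /tlin /Psi /= !big_nil.
have -> : Psi ((c, y) :: x) = tadd (tscale c%:~R (Psi_gen y)) (Psi x) by [].
by rewrite tlin_tadd tlin_tscale IH big_cons.
Qed.

End TensorFunctionals.

Lemma mu_sum (g : nat) (P : 'M[int]_(g + g)) (x : seq (int * gen g)) :
  mu P x = \sum_(p <- x) p.1 * (theta_gen lk_j p.2 - theta_gen (lk_jphi P) p.2).
Proof.
rewrite /mu /eps_theta -sumrB.
by apply: eq_bigr => p _; rewrite mulrBr.
Qed.

Section BilinearForms.
Variable g : nat.
Implicit Types (M N P : 'M[int]_(g + g)) (u v : H g).

Lemma bil_tr M u v : bil M^T u v = bil M v u.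
Proof.
have entry_tr (A : 'M[int]_1) : A 0 0 = A^T 0 0 by rewrite mxE.
by rewrite /bil entry_tr !trmx_mul !trmxK mulmxA.
Qed.

Lemma bil_mulmx M P u v : bil M (u *m P) (v *m P) = bil (P *m M *m P^T) u v.
Proof. by rewrite /bil trmx_mul !mulmxA. Qed.

Lemma bilD M N u v : bil (M + N) u v = bil M u v + bil N u v.
Proof. by rewrite /bil mulmxDr mulmxDl mxE. Qed.

End BilinearForms.

Section LagrangianTorelli.
Variables (g : nat) (P : 'M[int]_(g + g)) (S : 'M[int]_g).
Hypothesis P_A : forall i : 'I_g, avec i *m P = avec i.
Hypothesis P_B : forall l : 'I_g, bvec l *m P = bvec l + \sum_(k < g) S k l *: avec k.
Hypothesis S_sym : S^T = S.

Lemma P_block : P = block_mx 1%:M 0 S 1%:M.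
Proof.
apply/matrixP => i j.
have -> : P i j = row i P 0 j by rewrite mxE.
rewrite rowE.
case: (split_ordP i) => i' ->{i}.
- rewrite [_ *m P]P_A.
  case: (split_ordP j) => j' ->{j}; rewrite ?block_mxEul ?block_mxEur !mxE /=.
  + by rewrite eq_lshift eq_sym.
  + by rewrite eq_rlshift.
- rewrite [_ *m P]P_B.
  case: (split_ordP j) => j' ->{j};
    rewrite ?block_mxEdl ?block_mxEdr !mxE summxE /=.
  + rewrite eq_lrshift add0r (bigD1 j') //= big1 ?addr0.
      by rewrite !mxE !eqxx mulr1 -{1}S_sym mxE.
    by move=> k /negbTE nk; rewrite !mxE eq_lshift eq_sym nk mulr0.
  + rewrite eq_rshift eq_sym big1 ?addr0 //.
    by move=> k _; rewrite !mxE eq_rlshift mulr0.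
Qed.

Lemma omega_S_sym u v : bil (omega_S_mx S) u v = bil (omega_S_mx S) v u.
Proof. by rewrite -bil_tr /omega_S_mx tr_block_mx !trmx0 S_sym. Qed.

Lemma lk_jphiE u v :
  lk_jphi P u v = bil (omega_delta_mx g) u v + bil (omega_S_mx S) u v.
Proof.
rewrite /lk_jphi bil_mulmx -bilD; congr bil.
rewrite P_block /omega_delta_mx /omega_S_mx tr_block_mx !trmx0 !trmx1 S_sym.
rewrite !mulmx_block add_block_mx.
by rewrite !(mul0mx, mulmx0, mul1mx, mulmx1, addr0, add0r).
Qed.

Lemma mu_gen (x : gen g) :
  ((theta_gen lk_j x - theta_gen (lk_jphi P) x)%:~R : rat)
  = tlin (trS_then S (half_S_plus_delta S)) (Psi_gen x).
Proof.
case: x => [a b c d|u v] /=;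
  rewrite !lk_jphiE /lk_j /tlin /Tgen /odot /lie /tsub /tadd /tmul /tscale /tvec /=;
  rewrite !big_cons big_nil /= /half_S_plus_delta.
- rewrite (omega_S_sym b a) (omega_S_sym c a) (omega_S_sym d a).
  rewrite (omega_S_sym c b) (omega_S_sym d b) (omega_S_sym d c).
  by rewrite !(intrD, intrM, intrB); field.
- by rewrite (omega_S_sym v u); field.
Qed.

End LagrangianTorelli.

Theorem corollary4p17 (g : nat) (P : 'M[int]_(g + g)) (S : 'M[int]_g)
  (P_sympl : P *m omega_mx g *m P^T = omega_mx g)
  (P_A : forall i : 'I_g, avec i *m P = avec i)
  (P_B : forall l : 'I_g, bvec l *m P = bvec l + \sum_(k < g) S k l *: avec k)
  (S_sym : S^T = S) :
  forall x : seq (int * gen g),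
    ((mu P x)%:~R : rat) = tlin (trS_then S (half_S_plus_delta S)) (Psi x).
Proof.
move=> x; rewrite mu_sum tlin_Psi rmorph_sum /=.
apply: eq_bigr => p _.
by rewrite intrM (@mu_gen g P S P_A P_B S_sym).
Qed.
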